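(* Let $P=\{p_1,\ldots,p_\aleph\}\subset\mathbb{R}^3$ be a finite point set with a connected neighborhood graph (neighborhoods $\mathcal{N}(i)\subset P$), unit normals $n_j$ and weights $\omega_j\geq 0$. Consider the modified variational shape approximation procedure: starting from some partition $P=\dot{\bigcup}_{i=1}^m P_i$ with unit proxy normals $N_i$, repeatedly apply a proxy update step followed by a switch step, stopping when no switch can be performed. Then this procedure terminates after finitely many iterations.
   Context: The error is $E=\sum_{i=1}^m\sum_{p_j\in P_i}\omega_j\|n_j-N_i\|_2^2$. Proxy update step: with the partition fixed, set $N_i=\frac{\sum_{p_j\in P_i}\omega_j n_j}{\left\|\sum_{p_j\in P_i}\omega_j n_j\right\|_2}$ (denominators assumed nonzero). Switch step: with the proxy normals fixed, among all pairs consisting of a point $p_i\in P_\ell$ and a neighbor $p_j\in\mathcal{N}(i)$ with $p_j\in P_h$, $h\neq\ell$, consider reassigning $p_i$ from $P_\ell$ to $P_h$; perform the reassignment that reduces $E$ maximally, provided it strictly reduces $E$. A switch ''can be performed'' if some such reassignment strictly reduces $E$. *)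

From HB Require Import structures.
From mathcomp Require Import all_boot all_order all_algebra.
Set Implicit Arguments. Unset Strict Implicit. Unset Printing Implicit Defensive.
Import Order.TTheory GRing.Theory Num.Theory.
Local Open Scope ring_scope.

Section VSA.
Variable R : rcfType.

Definition sqnorm (v : 'rV[R]_3) : R := \sum_(k < 3) (v 0 k) ^+ 2.
Definition vnorm (v : 'rV[R]_3) : R := Num.sqrt (sqnorm v).

Variables (K m : nat).
(* a partition P = P_1 u ... u P_m is encoded by the label map a : point -> part *)
Notation assign := {ffun 'I_K -> 'I_m}.

Definition vsa_error (w : 'I_K -> R) (n : 'I_K -> 'rV[R]_3)
  (a : assign) (N : 'I_m -> 'rV[R]_3) : R :=
  \sum_(i < m) \sum_(j < K | a j == i) w j * sqnorm (n j - N i).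

Definition wsum (w : 'I_K -> R) (n : 'I_K -> 'rV[R]_3) (a : assign) (i : 'I_m)
  : 'rV[R]_3 := \sum_(j < K | a j == i) w j *: n j.

Definition proxy_update w n (a : assign) : 'I_m -> 'rV[R]_3 :=
  fun i => (vnorm (wsum w n a i))^-1 *: wsum w n a i.

Definition reassign (a : assign) (i : 'I_K) (h : 'I_m) : assign :=
  [ffun j => if j == i then h else a j].

Definition switch_candidate (nbr : rel 'I_K) (a : assign) (i : 'I_K) (h : 'I_m)
  : bool :=
  (h != a i) && [exists j, nbr i j && (a j == h)].

Definition can_switch nbr w n (a : assign) (N : 'I_m -> 'rV[R]_3) : Prop :=
  exists i h, switch_candidate nbr a i h /\
    vsa_error w n (reassign a i h) N < vsa_error w n a N.

Definition switch_step nbr w n (a : assign) (N : 'I_m -> 'rV[R]_3) (a' : assign)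
  : Prop :=
  exists i h, [/\ switch_candidate nbr a i h, a' = reassign a i h,
    vsa_error w n a' N < vsa_error w n a N &
    forall i' h', switch_candidate nbr a i' h' ->
      vsa_error w n a' N <= vsa_error w n (reassign a i' h') N].

Definition vsa_iteration nbr w n (a a' : assign) : Prop :=
  (forall i, wsum w n a i != 0) /\ switch_step nbr w n a (proxy_update w n a) a'.

End VSA.

From HB Require Import structures.
From mathcomp Require Import all_boot all_order all_algebra.
From mathcomp Require Import ring lra.
Import Order.TTheory GRing.Theory Num.Theory.
Set Implicit Arguments.
Unset Strict Implicit.
Unset Printing Implicit Defensive.

Local Open Scope ring_scope.

(* For a fixed partition, the proxy update is the minimiser of E over unit
   proxy normals: with unit normals, the error of part P_i with proxy X is
   2 * sum w_j - 2 <S_i, X> where S_i = sum w_j n_j, and <S_i, X> <= |S_i|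
   with equality at X = S_i / |S_i|.  Hence the error after the proxy update,
   E(a) := E(a, proxy_update a), satisfies
     E(a') <= E(a', proxy_update a) < E(a, proxy_update a) = E(a)
   along every performed iteration a -> a' that is followed by another one
   (whose proxy update supplies the nonvanishing of the sums S_i for a').
   A strictly decreasing quantity cannot run forever over the finitely many
   partitions.  Neither the sign of the weights nor the neighbourhood
   structure plays any role. *)

Lemma no_decreasing_seq (T : finType) (d : Order.disp_t) (U : porderType d)
    (f : T -> U) (s : nat -> T) :
  ~ (forall k, (f (s k.+1) < f (s k))%O).
Proof.
move=> f_s_decr.
have f_s_lt : {homo f \o s : i j / (i < j)%N >-> (j < i)%O}.
  by apply: homo_ltn => // y x z /[swap]; exact: lt_trans.
have s_inj : injective s.
  move=> i j sij; case: (ltngtP i j) => // ij; have := f_s_lt _ _ ij;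
  by rewrite /= sij ltxx.
have s_ord_inj : injective (fun i : 'I_#|T|.+1 => s i).
  by move=> i j /s_inj/val_inj.
have := leq_card _ s_ord_inj.
by rewrite card_ord ltnn.
Qed.

Section UnitVectors.
Variable R : rcfType.
Implicit Types (u v S X : 'rV[R]_3) (c : R).

Definition dot u v : R := \sum_(k < 3) u 0 k * v 0 k.

Lemma dotC u v : dot u v = dot v u.
Proof. by apply: eq_bigr => k _; rewrite mulrC. Qed.

Lemma dotZl c u v : dot (c *: u) v = c * dot u v.
Proof. by rewrite /dot mulr_sumr; apply: eq_bigr => k _; rewrite mxE mulrA. Qed.

Lemma dot_suml (I : finType) (P : pred I) (F : I -> 'rV[R]_3) v :
  dot (\sum_(j | P j) F j) v = \sum_(j | P j) dot (F j) v.
Proof.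
rewrite /dot; under eq_bigr => k _ do rewrite summxE mulr_suml.
by rewrite exchange_big.
Qed.

Lemma sqnorm_dot u : sqnorm u = dot u u.
Proof. by apply: eq_bigr => k _; rewrite expr2. Qed.

Lemma sqnormB u v : sqnorm (u - v) = sqnorm u + sqnorm v - 2 * dot u v.
Proof. rewrite /sqnorm /dot !big_ord_recr !big_ord0 /= !mxE; ring. Qed.

Lemma sqnormZ c u : sqnorm (c *: u) = c ^+ 2 * sqnorm u.
Proof.
by rewrite /sqnorm mulr_sumr; apply: eq_bigr => k _; rewrite mxE exprMn.
Qed.

Lemma sqnorm_ge0 u : 0 <= sqnorm u.
Proof. by apply: sumr_ge0 => k _; exact: sqr_ge0. Qed.

Lemma sqnorm_eq0 u : sqnorm u = 0 -> u = 0.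
Proof.
move=> u0; apply/matrixP => i k; rewrite (ord1 i) !mxE.
have /eqP : u 0 k ^+ 2 = 0.
  by apply: (psumr_eq0P _ u0) => // j _; exact: sqr_ge0.
by rewrite sqrf_eq0 => /eqP.
Qed.

Lemma sqr_vnorm u : vnorm u ^+ 2 = sqnorm u.
Proof. exact/sqr_sqrtr/sqnorm_ge0. Qed.

Lemma sqnorm_vnorm1 u : vnorm u = 1 -> sqnorm u = 1.
Proof. by rewrite -sqr_vnorm => ->; rewrite expr1n. Qed.

Lemma vnorm_gt0 u : u != 0 -> 0 < vnorm u.
Proof.
move=> u_neq0; rewrite sqrtr_gt0 lt_def sqnorm_ge0 andbT.
by apply: contra u_neq0 => /eqP/sqnorm_eq0/eqP.
Qed.

Lemma sqnorm_normalize S : S != 0 -> sqnorm ((vnorm S)^-1 *: S) = 1.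
Proof.
move=> /vnorm_gt0 S_gt0.
by rewrite sqnormZ -sqr_vnorm exprVn mulVf // expf_neq0 // gt_eqF.
Qed.

Lemma dot_normalize S : S != 0 -> dot S ((vnorm S)^-1 *: S) = vnorm S.
Proof.
move=> /vnorm_gt0 S_gt0.
by rewrite dotC dotZl -sqnorm_dot -sqr_vnorm expr2 mulKf // gt_eqF.
Qed.

Lemma dot_le_vnorm S X : S != 0 -> sqnorm X = 1 -> dot S X <= vnorm S.
Proof.
move=> S_neq0 X1; have S_gt0 := vnorm_gt0 S_neq0.
have : (vnorm S)^-1 * dot S X <= 1.
  have := sqnorm_ge0 ((vnorm S)^-1 *: S - X).
  by rewrite sqnormB sqnorm_normalize // X1 dotZl; lra.
by rewrite -(ler_pM2l S_gt0) mulVKf ?gt_eqF // mulr1.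
Qed.

End UnitVectors.

Section ProxyUpdate.
Variables (R : rcfType) (K m : nat) (w : 'I_K -> R) (n : 'I_K -> 'rV[R]_3).
Hypothesis n_unit : forall j, sqnorm (n j) = 1.

Lemma part_error_unit (a : {ffun 'I_K -> 'I_m}) i X : sqnorm X = 1 ->
  \sum_(j < K | a j == i) w j * sqnorm (n j - X) =
  2 * \sum_(j < K | a j == i) w j - 2 * dot (wsum w n a i) X.
Proof.
move=> X1; rewrite /wsum dot_suml !mulr_sumr -sumrB.
by apply: eq_bigr => j _; rewrite sqnormB n_unit X1 dotZl; ring.
Qed.

Lemma vsa_error_proxy_update_le (a : {ffun 'I_K -> 'I_m}) N :
  (forall i, wsum w n a i != 0) -> (forall i, sqnorm (N i) = 1) ->
  vsa_error w n a (proxy_update w n a) <= vsa_error w n a N.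
Proof.
move=> S_neq0 N1; apply: ler_sum => i _.
rewrite !part_error_unit ?sqnorm_normalize // /proxy_update dot_normalize //.
by have := dot_le_vnorm (S_neq0 i) (N1 i); lra.
Qed.

Definition proxy_error (a : {ffun 'I_K -> 'I_m}) : R :=
  vsa_error w n a (proxy_update w n a).

Lemma vsa_iteration_proxy_error_lt nbr (a a' : {ffun 'I_K -> 'I_m}) :
  vsa_iteration nbr w n a a' -> (forall i, wsum w n a' i != 0) ->
  proxy_error a' < proxy_error a.
Proof.
move=> [S_neq0 [? [? [_ _ switch_lt _]]]] S'_neq0.
apply: le_lt_trans switch_lt; apply: vsa_error_proxy_update_le => // i.
exact: sqnorm_normalize.
Qed.

End ProxyUpdate.

Theorem mainTheorem2 (R : rcfType) (K m : nat)
  (p : 'I_K -> 'rV[R]_3) (p_inj : injective p)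
  (nbr : rel 'I_K)
  (nbr_conn : forall i j, connect (fun x y => nbr x y || nbr y x) i j)
  (n : 'I_K -> 'rV[R]_3) (n_unit : forall j, vnorm (n j) = 1)
  (w : 'I_K -> R) (w_ge0 : forall j, 0 <= w j)
  (a0 : {ffun 'I_K -> 'I_m}) (N0 : 'I_m -> 'rV[R]_3)
  (N0_unit : forall i, vnorm (N0 i) = 1) :
  ~ (exists s : nat -> {ffun 'I_K -> 'I_m},
       s 0%N = a0 /\ forall k, vsa_iteration nbr w n (s k) (s k.+1)).
Proof.
move=> [s [_ s_iter]].
apply: (@no_decreasing_seq _ _ R (proxy_error w n) s) => k.
apply: vsa_iteration_proxy_error_lt (s_iter k) (s_iter k.+1).1.
by move=> j; exact: sqnorm_vnorm1.
Qed.
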